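(* Let $X$ be a $T_1$ space with $|X|<\mathfrak b$. Then $X$ is set strongly star Hurewicz if and only if $e(X)=\omega$.
   Context: For a family $\mathcal U$ of subsets of $X$ and $A\subseteq X$, $st(A,\mathcal U)=\bigcup\{U\in\mathcal U: U\cap A\neq\emptyset\}$. $X$ is set strongly star Hurewicz if for every nonempty $A\subseteq X$ and every sequence $(\mathcal U_n:n\in\omega)$ of families of open sets with $\overline A\subseteq\bigcup\mathcal U_n$ for all $n$, there are finite $F_n\subseteq\overline A$ such that each $x\in A$ lies in $st(F_n,\mathcal U_n)$ for all but finitely many $n$. $e(X)$ is the supremum of cardinalities of closed discrete subsets ($e(X)=\omega$ means all closed discrete subsets are countable). $\mathfrak b$ is the minimal cardinality of a $\leq^*$-unbounded subset of $\omega^\omega$. *)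

From HB Require Import structures.
From mathcomp Require Import all_boot all_order all_algebra.
From mathcomp Require Import all_classical all_reals all_analysis.
Set Implicit Arguments. Unset Strict Implicit. Unset Printing Implicit Defensive.
Local Open Scope classical_set_scope.
Local Open Scope card_scope.

Definition leq_star (f g : nat -> nat) : Prop :=
  exists N, forall n, (N <= n)%N -> (f n <= g n)%N.

Definition unbounded_family (F : set (nat -> nat)) : Prop :=
  forall g, exists2 f, F f & ~ leq_star f g.

(* |T| < b : no unbounded family has cardinality <= |T|
   (b = minimal cardinality of an unbounded family) *)
Definition card_lt_b (T : Type) : Prop :=
  forall F : set (nat -> nat), unbounded_family F -> ~ (F #<= [set: T]).

Definition star {T : Type} (A : set T) (U : set (set T)) : set T :=
  [set x | exists2 V, U V & V `&` A !=set0 /\ V x].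

Definition open_family {T : topologicalType} (U : set (set T)) : Prop :=
  forall V, U V -> open V.

Definition set_strongly_star_Hurewicz (T : topologicalType) : Prop :=
  forall (A : set T) (U : nat -> set (set T)),
    A !=set0 ->
    (forall n, open_family (U n)) ->
    (forall n, closure A `<=` \bigcup_(V in U n) V) ->
    exists F : nat -> set T,
      (forall n, finite_set (F n) /\ F n `<=` closure A) /\
      (forall x, A x -> exists N, forall n, (N <= n)%N -> star (F n) (U n) x).

Definition closed_discrete {T : topologicalType} (D : set T) : Prop :=
  closed D /\ forall x, D x -> exists U, open U /\ U x /\ U `&` D = [set x].

Definition extent_omega (T : topologicalType) : Prop :=
  forall D : set T, closed_discrete D -> countable D.

From HB Require Import structures.
From mathcomp Require Import all_boot all_order all_algebra.
From mathcomp Require Import all_classical all_reals all_analysis.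
Local Open Scope classical_set_scope.

(* If every closed discrete set is countable, then for each n a maximal
   subset D_n of cl(A) meeting every member of U_n at most once is closed
   discrete (this uses T_1) with cl(A) inside st(D_n, U_n), hence D_n is
   enumerated by a sequence e_n.  Sending x in A to a function
   n |-> k with x in st(e_n k, U_n) gives a family of at most |X| < b
   functions, so a single g dominates it and F_n = {e_n k : k <= g n} works.
   Conversely, for a closed discrete D take one open isolating neighbourhood
   per point: each x in D then lies in some finite F_n, so D is countable. *)

Definition separated_by {T : Type} (U : set (set T)) (D : set T) : Prop :=
  forall V, U V -> forall a b, D a -> D b -> V a -> V b -> a = b.

Definition maximal_separated {T : Type} (U : set (set T)) (C D : set T) :=
  [/\ D `<=` C, separated_by U D &
      forall B, D `<` B -> B `<=` C -> ~ separated_by U B].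

Lemma star_sub {T : Type} (A B : set T) (U : set (set T)) :
  A `<=` B -> star A U `<=` star B U.
Proof.
move=> AB x [V UV [[y [Vy Ay]] Vx]].
by exists V => //; split => //; exists y; split => //; exact: AB.
Qed.

Lemma star_nonempty {T : Type} {A : set T} {U : set (set T)} {x : T} :
  star A U x -> A !=set0.
Proof. by move=> [V _ [[y [_ Ay]] _]]; exists y. Qed.

Lemma star_witness {T : Type} {A : set T} {U : set (set T)} {x : T} :
  star A U x -> exists2 a, A a & star [set a] U x.
Proof.
move=> [V UV [[a [Va Aa]] Vx]].
by exists a => //; exists V => //; split => //; exists a.
Qed.

Lemma star_image_isolating {T : Type} (D F : set T) (W : T -> set T) :
  (forall y, D y -> W y `&` D = [set y]) -> F `<=` D ->
  D `&` star F (W @` D) `<=` F.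
Proof.
move=> WD FD x [Dx [_ [y Dy <-] [[z [Wyz Fz]] Wyx]]].
have xy : [set y] x by rewrite -(WD y Dy).
have zy : [set y] z by rewrite -(WD y Dy); split => //; exact: FD.
by rewrite xy -zy.
Qed.

Lemma exists_maximal_separated {T : Type} (U : set (set T)) (C : set T) :
  exists D, maximal_separated U C D.
Proof.
pose P := [set D | D `<=` C /\ separated_by U D].
have [D [[DC Dsep] Dmax]] : exists D, P D /\ forall B, D `<` B -> ~ P B.
  apply: Zorn_bigcup => F FP Ftot; split.
    by move=> x [Y FY Yx]; exact: (FP Y FY).1 x Yx.
  move=> V UV a b [Y FY Ya] [Z FZ Zb] Va Vb.
  have [YZ|ZY] := Ftot Y Z FY FZ.
    exact: (FP Z FZ).2 V UV a b (YZ a Ya) Zb Va Vb.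
  exact: (FP Y FY).2 V UV a b Ya (ZY b Zb) Va Vb.
by exists D; split => // B DB BC Bsep; exact: Dmax B DB (conj BC Bsep).
Qed.

Lemma maximal_separated_star_cover {T : Type} (U : set (set T)) (C D : set T) :
  C `<=` \bigcup_(V in U) V -> maximal_separated U C D -> C `<=` star D U.
Proof.
move=> Ccov [DC Dsep Dmax] z Cz; apply/not_notP => zNstar.
have meet_z V a : U V -> V z -> D a -> V a -> False.
  by move=> UV Vz Da Va; apply: zNstar; exists V => //; split => //; exists a.
have notDz : ~ D z.
  by move=> Dz; have [V UV Vz] := Ccov z Cz; exact: (meet_z V z UV Vz Dz Vz).
apply: (Dmax (D `|` [set z])).
- by split; [move=> x Dx; left | move=> /(_ z (or_intror erefl))].
- by move=> x [/DC|->].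
move=> V UV a b [Da|->] [Db|->] Va Vb.
- exact: Dsep V UV a b Da Db Va Vb.
- by case: (meet_z V a UV Vb Da Va).
- by case: (meet_z V b UV Va Db Vb).
- by [].
Qed.

Lemma separated_closed_discrete {X : topologicalType} (U : set (set X)) (D : set X) :
  accessible_space X -> open_family U -> separated_by U D ->
  closure D `<=` \bigcup_(V in U) V -> closed_discrete D.
Proof.
move=> T1 Uo Dsep Dcov; split.
  move=> p clDp; have [V UV Vp] := Dcov p clDp.
  have Vnbhs : nbhs p V by apply: open_nbhs_nbhs; split => //; exact: Uo.
  have [d [Dd Vd]] := clDp V Vnbhs.
  have [->//|pd] := pselect (p = d).
  have : nbhs p (V `&` ~` [set d]).
    apply: open_nbhs_nbhs; split; last by split.
    by apply: openI; [exact: Uo | rewrite openC; exact: accessible_closed_set1].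
  by move=> /clDp [x [Dx [Vx xd]]]; case: xd; exact: Dsep V UV x d Dx Dd Vx Vd.
move=> x Dx; have [V UV Vx] := Dcov x (subset_closure Dx).
exists V; split; first exact: Uo.
split => //; apply/seteqP; split => [y [Vy Dy]|y ->//].
exact: Dsep V UV y x Dy Dx Vy Vx.
Qed.

Lemma closed_discrete_star_kernel {X : topologicalType} (U : set (set X)) (C : set X) :
  accessible_space X -> open_family U -> closed C ->
  C `<=` \bigcup_(V in U) V ->
  exists D, [/\ D `<=` C, closed_discrete D & C `<=` star D U].
Proof.
move=> T1 Uo Ccl Ccov.
have [D Dmax] := exists_maximal_separated U C.
have [DC Dsep _] := Dmax.
exists D; split => //; last exact: maximal_separated_star_cover Dmax.
apply: separated_closed_discrete Dsep _ => //.
by move=> x /(closureS DC); rewrite -(closure_id C).1 //; exact: Ccov.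
Qed.

Lemma countable_nonempty_range {T : Type} {D : set T} :
  countable D -> D !=set0 -> exists e : nat -> T, D = range e.
Proof. by move=> /pfcard_geP[->[]//|/surjfunPex]. Qed.

Lemma extent_omega_star_enumeration {X : topologicalType} (U : set (set X)) (C : set X) :
  accessible_space X -> extent_omega X -> open_family U -> closed C ->
  C !=set0 -> C `<=` \bigcup_(V in U) V ->
  exists e : nat -> X, range e `<=` C /\ C `<=` star (range e) U.
Proof.
move=> T1 eX Uo Ccl [c Cc] Ccov.
have [D [DC /eX Dctbl CD]] := closed_discrete_star_kernel U C T1 Uo Ccl Ccov.
have [e De] := countable_nonempty_range Dctbl (star_nonempty (CD c Cc)).
by exists e; rewrite -De.
Qed.

Lemma card_lt_b_dominated {T : Type} (A : set T) (h : T -> nat -> nat) :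
  card_lt_b T -> exists g, forall x, A x -> leq_star (h x) g.
Proof.
move=> ltb; apply/not_notP => undominated; apply: (ltb (h @` A)).
  move=> g; apply/not_notP => bounded; apply: undominated.
  exists g => x Ax; apply/not_notP => nle; apply: bounded.
  by exists (h x) => //; exists x.
exact: card_le_trans (card_image_le h A) (subset_card_le (subsetT A)).
Qed.

Lemma set_strongly_star_Hurewicz_extent_omega (X : topologicalType) :
  set_strongly_star_Hurewicz X -> extent_omega X.
Proof.
move=> sSH D [Dcl Ddisc].
have [->|/eqP/set0P D0] := pselect (D = set0); first exact: countable0.
have /choice[W HW] : forall x, exists W : set X,
    D x -> [/\ open W, W x & W `&` D = [set x]].
  move=> x; have [/Ddisc[W [Wo [Wx WD]]]|nDx] := pselect (D x).
    by exists W.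
  by exists setT.
have clD : closure D = D by apply/esym/closure_id.
have [|| F [Ffin Fcov]] := sSH D (fun=> W @` D) D0.
- by move=> n _ [x Dx <-]; have [] := HW x Dx.
- move=> n x; rewrite clD => Dx; exists (W x); first by exists x.
  by have [] := HW x Dx.
have DF : D `<=` \bigcup_n F n.
  move=> x Dx; have [N /(_ N (leqnn N)) FNx] := Fcov x Dx.
  exists N => //; apply: (@star_image_isolating _ D _ W) => //.
  - by move=> y /HW[].
  - by rewrite -clD; exact: (Ffin N).2.
apply: sub_countable (subset_card_le DF) _.
apply: bigcup_countable; first exact: card_lexx.
by move=> n _; apply: finite_set_countable; exact: (Ffin n).1.
Qed.

Lemma extent_omega_set_strongly_star_Hurewicz (X : topologicalType) :
  accessible_space X -> card_lt_b X ->
  extent_omega X -> set_strongly_star_Hurewicz X.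
Proof.
move=> T1 ltb eX A U [a Aa] Uo Ucov.
have /choice[e He] : forall n, exists e : nat -> X,
    range e `<=` closure A /\ closure A `<=` star (range e) (U n).
  move=> n; apply: extent_omega_star_enumeration => //; first exact: closed_closure.
  by exists a; exact: subset_closure.
have /choice[h Hh] : forall x, exists k : nat -> nat,
    A x -> forall n, star [set e n (k n)] (U n) x.
  move=> x; have [Ax|nAx] := pselect (A x); last by exists (fun=> 0%N).
  have /choice[k Hk] : forall n, exists k, star [set e n k] (U n) x.
    move=> n; have [_ [k _ <-]] := star_witness ((He n).2 x (subset_closure Ax)).
    by exists k.
  by exists k.
have [g Hg] := card_lt_b_dominated A h ltb.
exists (fun n => e n @` `I_(g n).+1); split.
  move=> n; split; first exact/finite_image/finite_II.
  by move=> _ [k _ <-]; apply: (He n).1; exists k.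
move=> x Ax; have [N HN] := Hg x Ax.
exists N => n Nn; apply: star_sub (Hh x Ax n).
by move=> _ ->; exists (h x n) => //=; rewrite ltnS; exact: HN.
Qed.

Theorem corollary4p1 (X : topologicalType) :
  accessible_space X -> card_lt_b X ->
  (set_strongly_star_Hurewicz X <-> extent_omega X).
Proof.
move=> T1 ltb; split; first exact: set_strongly_star_Hurewicz_extent_omega.
exact: extent_omega_set_strongly_star_Hurewicz.
Qed.
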